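(* Let $X$ be a uniformly convex and uniformly smooth Banach space, $D_0$ a dislocation group on $X$ and $D\subset D_0$. Let $(u_k)\subset X$ be bounded, $M\in\mathbb N$, and let $(g_k^{(n)})_k\subset D$, $w^{(n)}\in X$, $n=1,\dots,M$, satisfy $g^{(1)}_k=I$, $(g^{(n)}_k)^{-1}u_k\rightharpoondown w^{(n)}$ for $n=1,\dots,M$, and $(g_k^{(n)})^{-1}g_k^{(m)}\rightharpoonup0$ whenever $n<m\le M$. Suppose there is a sequence $(g_k^{(M+1)})\subset D$ such that, along a subsequence, $(g_k^{(M+1)})^{-1}\big(u_k-w^{(1)}-g_k^{(2)}w^{(2)}-\dots-g_k^{(M)}w^{(M)}\big)\rightharpoondown w^{(M+1)}\ne0$. Then (along that subsequence) $(g_k^{(n)})^{-1}g_k^{(M+1)}\rightharpoonup0$ for $n=1,\dots,M$.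
   Context: Δ-convergence: $x_k\rightharpoondown x$ if for every $y\in X$, $\limsup_k(\|x_k-x\|-\|x_k-y\|)\le0$. Operator convergence $g_k\rightharpoonup g$: $g_kx\rightharpoonup gx$ weakly for all $x$; strong convergence: $g_kx\to gx$ in norm for all $x$. A group $D_0$ of bijective linear isometries of $X$ is a dislocation group if: $(\ast)$ whenever $(g_k)\subset D_0$ and $g_k\not\rightharpoonup0$, some subsequence has both $(g_{k_j})$ and $(g_{k_j}^{-1})$ strongly convergent; and $(\ast\ast)$ whenever $u_k\rightharpoondown0$, $w\in X$, $(g_k)\subset D_0$, $g_k\rightharpoonup0$, then $u_k+g_kw\rightharpoondown0$. *)

From Stdlib Require Import Reals Lra.
Open Scope R_scope.

Record Banach := mkBanach {
  V :> Type;
  vadd : V -> V -> V;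
  vopp : V -> V;
  vzero : V;
  vscal : R -> V -> V;
  vnorm : V -> R;
  vadd_assoc : forall x y z, vadd x (vadd y z) = vadd (vadd x y) z;
  vadd_comm : forall x y, vadd x y = vadd y x;
  vadd_zero : forall x, vadd x vzero = x;
  vadd_opp : forall x, vadd x (vopp x) = vzero;
  vscal_one : forall x, vscal 1 x = x;
  vscal_assoc : forall a b x, vscal a (vscal b x) = vscal (a * b) x;
  vscal_distr_v : forall a x y, vscal a (vadd x y) = vadd (vscal a x) (vscal a y);
  vscal_distr_s : forall a b x, vscal (a + b) x = vadd (vscal a x) (vscal b x);
  vnorm_nonneg : forall x, 0 <= vnorm x;
  vnorm_eq0 : forall x, vnorm x = 0 -> x = vzero;
  vnorm_scal : forall a x, vnorm (vscal a x) = Rabs a * vnorm x;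
  vnorm_triangle : forall x y, vnorm (vadd x y) <= vnorm x + vnorm y;
  vcomplete : forall s : nat -> V,
    (forall eps, 0 < eps -> exists N, forall m n, (N <= m)%nat -> (N <= n)%nat ->
        vnorm (vadd (s m) (vopp (s n))) < eps) ->
    exists l, forall eps, 0 < eps -> exists N, forall n, (N <= n)%nat ->
        vnorm (vadd (s n) (vopp l)) < eps
}.

Arguments vadd {_} _ _.
Arguments vopp {_} _.
Arguments vzero {_}.
Arguments vscal {_} _ _.
Arguments vnorm {_} _.

Definition vsub {X : Banach} (x y : X) : X := vadd x (vopp y).

Definition uniformly_convex (X : Banach) : Prop :=
  forall eps, 0 < eps <= 2 -> exists delta, 0 < delta /\
    forall x y : X, vnorm x <= 1 -> vnorm y <= 1 -> eps <= vnorm (vsub x y) ->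
      vnorm (vscal (1/2) (vadd x y)) <= 1 - delta.

(* Uniform smoothness: the modulus of smoothness
   rho(tau) = sup { (|x+tau y| + |x - tau y|)/2 - 1 : |x| = |y| = 1 }
   satisfies rho(tau)/tau -> 0 as tau -> 0+. *)
Definition uniformly_smooth (X : Banach) : Prop :=
  forall eps, 0 < eps -> exists delta, 0 < delta /\
    forall tau, 0 < tau < delta -> forall x y : X, vnorm x = 1 -> vnorm y = 1 ->
      (vnorm (vadd x (vscal tau y)) + vnorm (vsub x (vscal tau y))) / 2 - 1 <= eps * tau.

Definition bounded_linear_functional {X : Banach} (f : X -> R) : Prop :=
  (forall x y, f (vadd x y) = f x + f y) /\
  (forall a x, f (vscal a x) = a * f x) /\
  (exists C, forall x, Rabs (f x) <= C * vnorm x).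

Definition weak_conv {X : Banach} (x : nat -> X) (l : X) : Prop :=
  forall f : X -> R, bounded_linear_functional f -> Un_cv (fun k => f (x k)) (f l).

Definition strong_conv {X : Banach} (x : nat -> X) (l : X) : Prop :=
  Un_cv (fun k => vnorm (vsub (x k) l)) 0.

Definition limsup_nonpos (a : nat -> R) : Prop :=
  forall eps, 0 < eps -> exists N, forall k, (N <= k)%nat -> a k <= eps.

Definition delta_conv {X : Banach} (x : nat -> X) (l : X) : Prop :=
  forall y : X, limsup_nonpos (fun k => vnorm (vsub (x k) l) - vnorm (vsub (x k) y)).

Definition op_weak_conv {X : Banach} (g : nat -> X -> X) (h : X -> X) : Prop :=
  forall x, weak_conv (fun k => g k x) (h x).
Definition op_weak_conv_zero {X : Banach} (g : nat -> X -> X) : Prop :=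
  op_weak_conv g (fun _ => vzero).
Definition op_strong_conv {X : Banach} (g : nat -> X -> X) (h : X -> X) : Prop :=
  forall x, strong_conv (fun k => g k x) (h x).

Definition strictly_increasing (phi : nat -> nat) : Prop :=
  forall i j, (i < j)%nat -> (phi i < phi j)%nat.

Definition bij_lin_isometry {X : Banach} (g : X -> X) : Prop :=
  (forall x y, g (vadd x y) = vadd (g x) (g y)) /\
  (forall a x, g (vscal a x) = vscal a (g x)) /\
  (forall x, vnorm (g x) = vnorm x) /\
  (forall y, exists x, g x = y) /\
  (forall x x', g x = g x' -> x = x').

Definition is_inverse {X : Banach} (g ginv : X -> X) : Prop :=
  forall x, ginv (g x) = x /\ g (ginv x) = x.

Definition isometry_group {X : Banach} (D0 : (X -> X) -> Prop) : Prop :=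
  (forall g, D0 g -> bij_lin_isometry g) /\
  D0 (fun x => x) /\
  (forall g h, D0 g -> D0 h -> D0 (fun x => g (h x))) /\
  (forall g h, D0 g -> is_inverse g h -> D0 h).

(* Dislocation group.  Sequences of group elements are given together with
   their (unique) inverses. *)
Definition dislocation_group {X : Banach} (D0 : (X -> X) -> Prop) : Prop :=
  isometry_group D0 /\
  (forall g ginv : nat -> X -> X,
     (forall k, D0 (g k)) -> (forall k, is_inverse (g k) (ginv k)) ->
     ~ op_weak_conv_zero g ->
     exists phi, strictly_increasing phi /\
       (exists h, op_strong_conv (fun j => g (phi j)) h) /\
       (exists h', op_strong_conv (fun j => ginv (phi j)) h')) /\
  (forall (u : nat -> X) (w : X) (g : nat -> X -> X),
     delta_conv u vzero -> (forall k, D0 (g k)) -> op_weak_conv_zero g ->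
     delta_conv (fun k => vadd (u k) (g k w)) vzero).

Fixpoint vsum1 {X : Banach} (M : nat) (f : nat -> X) : X :=
  match M with
  | O => vzero
  | S m => vadd (vsum1 m f) (f (S m))
  end.

(* Suppose some (g^(n))^-1 g^(M+1) does not go weakly to 0.  By the dislocation
   property a subsequence of it converges strongly, to an operator h.  Seen
   through (g^(n))^-1, the remainder u_k - sum_m g^(m)_k w^(m) Δ-converges to 0,
   since every profile other than w^(n) is moved weakly to 0 by
   (g^(n))^-1 g^(m).  Transporting this through the strongly convergent
   (g^(n))^-1 g^(M+1) shows that (g^(M+1))^-1 applied to the remainder also
   Δ-converges to 0; Δ-limits of bounded sequences are unique in a uniformly
   convex space, so w^(M+1) = 0. *)
From Stdlib Require Import Reals Lra Lia Classical.
Open Scope R_scope.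

Section VectorAlgebra.
Context {X : Banach}.
Implicit Types (x y a b c p q : X).

Lemma vadd_zero_l x : vadd vzero x = x.
Proof. rewrite vadd_comm; apply vadd_zero. Qed.

Lemma vopp_unique x y : vadd x y = vzero -> y = vopp x.
Proof.
  intro H. rewrite <- (vadd_zero _ y), <- (vadd_opp _ x).
  rewrite vadd_assoc, (vadd_comm _ y x), H. apply vadd_zero_l.
Qed.

Lemma vopp_involutive x : vopp (vopp x) = x.
Proof. symmetry; apply vopp_unique. rewrite vadd_comm; apply vadd_opp. Qed.

Lemma vopp_zero : vopp (@vzero X) = vzero.
Proof. symmetry; apply vopp_unique, vadd_zero. Qed.

Lemma vopp_add x y : vopp (vadd x y) = vadd (vopp x) (vopp y).
Proof.
  symmetry; apply vopp_unique.
  rewrite vadd_assoc, (vadd_comm _ (vadd x y) (vopp x)), vadd_assoc.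
  rewrite (vadd_comm _ (vopp x) x), vadd_opp, vadd_zero_l. apply vadd_opp.
Qed.

Lemma vzero_of_double x : x = vadd x x -> x = vzero.
Proof.
  intro H. transitivity (vadd (vadd x x) (vopp x)).
  - rewrite <- vadd_assoc, vadd_opp, vadd_zero. reflexivity.
  - rewrite <- H. apply vadd_opp.
Qed.

Section Additive.
Variable f : X -> X.
Hypothesis f_add : forall x y, f (vadd x y) = vadd (f x) (f y).

Lemma additive_zero : f vzero = vzero.
Proof. apply vzero_of_double. rewrite <- f_add, vadd_zero. reflexivity. Qed.

Lemma additive_opp x : f (vopp x) = vopp (f x).
Proof. apply vopp_unique. rewrite <- f_add, vadd_opp. apply additive_zero. Qed.

Lemma additive_sub x y : f (vsub x y) = vsub (f x) (f y).
Proof. unfold vsub. rewrite f_add, additive_opp. reflexivity. Qed.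

End Additive.

Lemma vscal_zero x : vscal 0 x = vzero.
Proof. apply vzero_of_double. rewrite <- vscal_distr_s. f_equal. ring. Qed.

Lemma vscal_opp1 x : vscal (-1) x = vopp x.
Proof.
  apply vopp_unique. rewrite <- (vscal_one _ x) at 1. rewrite <- vscal_distr_s.
  replace (1 + -1) with 0 by ring. apply vscal_zero.
Qed.

Lemma vscal_sub t p q : vscal t (vsub p q) = vsub (vscal t p) (vscal t q).
Proof. apply additive_sub. intros; apply vscal_distr_v. Qed.

Lemma vnorm_opp x : vnorm (vopp x) = vnorm x.
Proof. rewrite <- vscal_opp1, vnorm_scal, Rabs_left by lra. ring. Qed.

Lemma vnorm_zero : vnorm (@vzero X) = 0.
Proof. rewrite <- (vscal_zero vzero), vnorm_scal, Rabs_R0. ring. Qed.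

Lemma vsub_zero x : vsub x vzero = x.
Proof. unfold vsub. rewrite vopp_zero. apply vadd_zero. Qed.

Lemma vsub_diag x : vsub x x = vzero.
Proof. apply vadd_opp. Qed.

Lemma vsub_add_cancel x y : vadd (vsub x y) y = x.
Proof. unfold vsub. rewrite <- vadd_assoc, (vadd_comm _ (vopp y)), vadd_opp. apply vadd_zero. Qed.

Lemma vsub_trans a b c : vadd (vsub a b) (vsub b c) = vsub a c.
Proof.
  unfold vsub. rewrite <- vadd_assoc, (vadd_assoc _ (vopp b)), (vadd_comm _ (vopp b)).
  rewrite vadd_opp, vadd_zero_l. reflexivity.
Qed.

Lemma vsub_add2r x a c : vsub (vadd x c) (vadd a c) = vsub x a.
Proof.
  unfold vsub. rewrite vopp_add, (vadd_comm _ (vopp a)), vadd_assoc.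
  rewrite <- (vadd_assoc _ x), vadd_opp, vadd_zero. reflexivity.
Qed.

Lemma vsub_addl x c y : vsub (vadd x c) y = vsub x (vsub y c).
Proof. unfold vsub. rewrite vopp_add, vopp_involutive, (vadd_comm _ (vopp y)), vadd_assoc. reflexivity. Qed.

Lemma vsub_addr x s t : vsub x (vadd s t) = vadd (vsub x s) (vopp t).
Proof. unfold vsub. rewrite vopp_add, vadd_assoc. reflexivity. Qed.

Lemma vadd_sub_add_cancel x a c : vadd (vadd (vsub x a) c) a = vadd x c.
Proof.
  rewrite <- vadd_assoc, (vadd_comm _ c a), vadd_assoc, vsub_add_cancel. reflexivity.
Qed.

Lemma vsub_subl x c : vsub (vsub x c) x = vopp c.
Proof. unfold vsub. rewrite (vadd_comm _ x), <- vadd_assoc, vadd_opp, vadd_zero. reflexivity. Qed.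

Lemma vsub_subr x c : vsub x (vsub x c) = c.
Proof. unfold vsub. rewrite vopp_add, vopp_involutive, vadd_assoc, vadd_opp, vadd_zero_l. reflexivity. Qed.

Lemma vmidpoint_sub x c : vscal (1/2) (vadd (vsub x c) x) = vsub x (vscal (1/2) c).
Proof.
  unfold vsub. rewrite (vadd_comm _ (vadd x (vopp c))), vadd_assoc, vscal_distr_v.
  rewrite <- (vscal_one _ x) at 1 2. rewrite <- vscal_distr_s, vscal_assoc.
  replace (1/2 * (1 + 1)) with 1 by field. rewrite vscal_one.
  f_equal. apply additive_opp. intros; apply vscal_distr_v.
Qed.

Lemma vnorm_sub_le x y : vnorm (vsub x y) <= vnorm x + vnorm y.
Proof. unfold vsub. rewrite <- (vnorm_opp y). apply vnorm_triangle. Qed.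

Lemma vnorm_sub_triangle a b c : vnorm (vsub a c) <= vnorm (vsub a b) + vnorm (vsub b c).
Proof. rewrite <- (vsub_trans a b c). apply vnorm_triangle. Qed.

Lemma vnorm_vsum1_bounded (f : nat -> nat -> X) (p : nat) :
  (forall m, (1 <= m <= p)%nat -> exists K, forall k, vnorm (f k m) <= K) ->
  exists K, forall k, vnorm (vsum1 p (f k)) <= K.
Proof.
  induction p as [|p IH]; intro Hf.
  - exists 0. intro k. simpl. rewrite vnorm_zero. lra.
  - destruct IH as [K HK]; [intros m Hm; apply Hf; lia|].
    destruct (Hf (S p) ltac:(lia)) as [K' HK'].
    exists (K + K'). intro k. simpl.
    eapply Rle_trans; [apply vnorm_triangle|]. specialize (HK k). specialize (HK' k). lra.
Qed.

End VectorAlgebra.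

Lemma strictly_increasing_ge (phi : nat -> nat) :
  strictly_increasing phi -> forall i, (i <= phi i)%nat.
Proof.
  intros H i. induction i as [|i IH]; [lia|].
  specialize (H i (S i) (Nat.lt_succ_diag_r i)). lia.
Qed.

Section DeltaConvergence.
Context {X : Banach}.
Implicit Types (x : nat -> X) (a : X).

Lemma delta_conv_ext x x' a : (forall k, x k = x' k) -> delta_conv x a -> delta_conv x' a.
Proof.
  intros E H y eps He. destruct (H y eps He) as [N HN]. exists N. intros k Hk.
  rewrite <- E. auto.
Qed.

Lemma delta_conv_subseq x a phi :
  strictly_increasing phi -> delta_conv x a -> delta_conv (fun i => x (phi i)) a.
Proof.
  intros Hphi H y eps He. destruct (H y eps He) as [N HN]. exists N. intros k Hk.
  apply HN. pose proof (strictly_increasing_ge phi Hphi k). lia.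
Qed.

Lemma delta_conv_translate x a c :
  delta_conv x a -> delta_conv (fun k => vadd (x k) c) (vadd a c).
Proof.
  intros H y eps He. destruct (H (vsub y c) eps He) as [N HN]. exists N. intros k Hk.
  rewrite vsub_add2r, vsub_addl. auto.
Qed.

Lemma delta_conv_const a : delta_conv (fun _ => a) a.
Proof.
  intros y eps He. exists 0%nat. intros k _. rewrite vsub_diag, vnorm_zero.
  pose proof (vnorm_nonneg _ (vsub a y)). lra.
Qed.

Lemma delta_conv_of_strong x a : strong_conv x a -> delta_conv x a.
Proof.
  intros H y eps He. destruct (H eps He) as [N HN]. exists N. intros k Hk.
  specialize (HN k Hk). unfold R_dist in HN. rewrite Rminus_0_r in HN.
  pose proof (vnorm_nonneg _ (vsub (x k) y)).
  pose proof (Rle_abs (vnorm (vsub (x k) a))). lra.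
Qed.

(* [|S v - y| = |v - T y|], and [T y] is eventually near [h y]. *)
Lemma delta_conv0_pullback (T S : nat -> X -> X) (h : X -> X) (v : nat -> X) :
  (forall k, bij_lin_isometry (S k)) -> (forall k, is_inverse (T k) (S k)) ->
  op_strong_conv T h -> delta_conv v vzero ->
  delta_conv (fun k => S k (v k)) vzero.
Proof.
  intros HS HTS Hh Hv y eps He.
  destruct (Hh y (eps / 2) ltac:(lra)) as [N1 HN1].
  destruct (Hv (h y) (eps / 2) ltac:(lra)) as [N2 HN2].
  exists (N1 + N2)%nat. intros k Hk.
  specialize (HN1 k ltac:(lia)). specialize (HN2 k ltac:(lia)).
  unfold R_dist in HN1. rewrite Rminus_0_r in HN1. rewrite vsub_zero in HN2 |- *.
  destruct (HS k) as [S_add [_ [S_norm _]]].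
  rewrite <- (proj1 (HTS k y)), <- (additive_sub _ S_add), !S_norm.
  pose proof (vnorm_sub_triangle (v k) (T k y) (h y)).
  pose proof (Rle_abs (vnorm (vsub (T k y) (h y)))).
  lra.
Qed.

End DeltaConvergence.

Section UniformConvexity.
Context {X : Banach}.
Hypothesis HUC : uniformly_convex X.

Lemma uniformly_convex_ball (d b : R) : 0 < d -> d <= 2 * b ->
  exists delta, 0 < delta /\
    forall (r : R) (p q : X), 0 < r <= b -> vnorm p <= r -> vnorm q <= r ->
      d <= vnorm (vsub p q) -> vnorm (vscal (1/2) (vadd p q)) <= r * (1 - delta).
Proof.
  intros Hd Hdb.
  assert (Hb : 0 < b) by lra.
  destruct (HUC (d / b)) as [delta [Hdelta Hconv]].
  { split; [apply Rdiv_lt_0_compat; lra|].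
    apply (Rmult_le_reg_r b); [lra|]. field_simplify; lra. }
  exists delta. split; [exact Hdelta|]. intros r p q [Hr Hrb] Hp Hq Hpq.
  specialize (Hconv (vscal (1/r) p) (vscal (1/r) q)).
  rewrite <- vscal_sub, <- vscal_distr_v, vscal_assoc, Rmult_comm, <- vscal_assoc in Hconv.
  rewrite !(vnorm_scal _ (1/r)), Rabs_right in Hconv by (apply Rle_ge, Rlt_le, Rdiv_lt_0_compat; lra).
  assert (Hmid : 1 / r * vnorm (vscal (1/2) (vadd p q)) <= 1 - delta).
  { apply Hconv.
    - apply (Rmult_le_reg_l r); [lra|]. field_simplify; lra.
    - apply (Rmult_le_reg_l r); [lra|]. field_simplify; lra.
    - apply Rle_trans with (d / r).
      + unfold Rdiv. apply Rmult_le_compat_l; [lra|apply Rinv_le_contravar; lra].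
      + replace (1 / r * vnorm (vsub p q)) with (vnorm (vsub p q) / r) by (field; lra).
        unfold Rdiv. apply Rmult_le_compat_r; [apply Rlt_le, Rinv_0_lt_compat|]; lra. }
  apply (Rmult_le_compat_l r) in Hmid; [|lra].
  replace (r * (1 / r * vnorm (vscal (1/2) (vadd p q)))) with (vnorm (vscal (1/2) (vadd p q)))
    in Hmid by (field; lra).
  exact Hmid.
Qed.

(* With [p = x_k - c] and [q = x_k]: Δ-convergence to both [c] and [0] makes
   [|p|], [|q|] and [|(p + q)/2| = |x_k - c/2|] asymptotically equal, while
   [|p - q| = |c|], contradicting uniform convexity. *)
Lemma delta_conv_unique0 (x : nat -> X) (c : X) (B : R) :
  (forall k, vnorm (x k) <= B) -> delta_conv x c -> delta_conv x vzero -> c = vzero.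
Proof.
  intros Hx Hc H0. apply NNPP. intro Hne.
  set (d := vnorm c).
  assert (Hd : 0 < d).
  { destruct (Rle_lt_or_eq_dec 0 d (vnorm_nonneg _ c)) as [|Hd0]; [assumption|].
    exfalso. apply Hne, vnorm_eq0. symmetry. exact Hd0. }
  assert (HB : 0 <= B) by (pose proof (Hx 0%nat); pose proof (vnorm_nonneg _ (x 0%nat)); lra).
  destruct (uniformly_convex_ball d (B + d) Hd ltac:(lra)) as [delta [Hdelta Hconv]].
  set (eps := d * delta / 8).
  assert (Heps : 0 < eps) by (unfold eps; apply Rdiv_lt_0_compat; [apply Rmult_lt_0_compat|]; lra).
  destruct (Hc vzero eps Heps) as [N1 HN1].
  destruct (H0 c eps Heps) as [N2 HN2].
  destruct (Hc (vscal (1/2) c) eps Heps) as [N3 HN3].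
  set (k := (N1 + N2 + N3)%nat).
  specialize (HN1 k ltac:(unfold k; lia)). specialize (HN2 k ltac:(unfold k; lia)).
  specialize (HN3 k ltac:(unfold k; lia)).
  rewrite vsub_zero in HN1, HN2.
  set (p := vsub (x k) c) in *. set (q := x k) in *.
  assert (Hq : vnorm q <= B) by apply Hx.
  assert (Hp : vnorm p <= B + d) by (pose proof (vnorm_sub_le q c); unfold p, q, d in *; lra).
  assert (Hd2 : d <= vnorm p + vnorm q).
  { unfold d. rewrite <- (vsub_subr q c), Rplus_comm. apply vnorm_sub_le. }
  set (r := Rmax (vnorm p) (vnorm q)).
  assert (Hrp : vnorm p <= r) by apply Rmax_l.
  assert (Hrq : vnorm q <= r) by apply Rmax_r.
  assert (Hr : r = vnorm p \/ r = vnorm q) by (unfold r, Rmax; destruct Rle_dec; auto).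
  specialize (Hconv r p q ltac:(split; lra) Hrp Hrq).
  replace (vsub p q) with (vopp c) in Hconv by (symmetry; apply vsub_subl).
  replace (vscal (1/2) (vadd p q)) with (vsub q (vscal (1/2) c)) in Hconv
    by (symmetry; apply vmidpoint_sub).
  rewrite vnorm_opp in Hconv.
  specialize (Hconv (Rle_refl d)).
  assert (Hrdelta : r * delta <= 2 * eps) by (destruct Hr; lra).
  unfold eps in Hrdelta. nra.
Qed.

End UniformConvexity.

Lemma is_inverse_sym {X : Banach} (g ginv : X -> X) : is_inverse g ginv -> is_inverse ginv g.
Proof. intros H x. destruct (H x). split; assumption. Qed.

Lemma is_inverse_comp {X : Banach} (a ai b bi : X -> X) :
  is_inverse a ai -> is_inverse b bi -> is_inverse (fun x => ai (b x)) (fun x => bi (a x)).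
Proof.
  intros Ha Hb x. split.
  - rewrite (proj2 (Ha (b x))). apply Hb.
  - rewrite (proj2 (Hb (a x))). apply Ha.
Qed.

Section DislocationGroup.
Context {X : Banach}.
Variable D0 : (X -> X) -> Prop.
Hypothesis HD0 : dislocation_group D0.

Lemma dislocation_isometry g : D0 g -> bij_lin_isometry g.
Proof. apply (proj1 (proj1 HD0)). Qed.

Lemma dislocation_vnorm g x : D0 g -> vnorm (g x) = vnorm x.
Proof. intro Hg. apply (dislocation_isometry g Hg). Qed.

Lemma dislocation_inv g ginv : D0 g -> is_inverse g ginv -> D0 ginv.
Proof. apply (proj2 (proj2 (proj2 (proj1 HD0)))). Qed.

Lemma dislocation_inv_comp a ai b :
  D0 a -> is_inverse a ai -> D0 b -> D0 (fun x => ai (b x)).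
Proof.
  intros Ha Hai Hb. destruct HD0 as [[_ [_ [Hcomp Hinv]]] _].
  apply Hcomp; [apply (Hinv a)|]; assumption.
Qed.

Lemma delta_conv_add_dislocation (x : nat -> X) (a w : X) (C : nat -> X -> X) :
  delta_conv x a -> (forall k, D0 (C k)) -> op_weak_conv_zero C ->
  delta_conv (fun k => vadd (x k) (C k w)) a.
Proof.
  intros Hx HC HCw. destruct HD0 as [_ [_ Hss]].
  pose proof (delta_conv_translate x a (vopp a) Hx) as Hx0. rewrite vadd_opp in Hx0.
  pose proof (delta_conv_translate _ _ a (Hss _ w C Hx0 HC HCw)) as H.
  rewrite vadd_zero_l in H.
  eapply delta_conv_ext; [|exact H]. intro k. apply vadd_sub_add_cancel.
Qed.

Lemma dislocation_inv_delta_conv0 (T S : nat -> X -> X) (v : nat -> X) :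
  (forall k, D0 (T k)) -> (forall k, is_inverse (T k) (S k)) ->
  ~ op_weak_conv_zero T -> delta_conv v vzero ->
  exists psi, strictly_increasing psi /\ delta_conv (fun i => S (psi i) (v (psi i))) vzero.
Proof.
  intros HT HTS HTw Hv.
  destruct (proj1 (proj2 HD0) T S HT HTS HTw) as [psi [Hpsi [[h Hh] _]]].
  exists psi. split; [exact Hpsi|].
  apply (delta_conv0_pullback (fun i => T (psi i)) (fun i => S (psi i)) h);
    [|intro i; apply HTS|exact Hh|exact (delta_conv_subseq _ _ _ Hpsi Hv)].
  intro i. apply dislocation_isometry, (dislocation_inv (T (psi i))); auto.
Qed.

Hypothesis HUC : uniformly_convex X.

(* Otherwise, along a subsequence, [G k] would converge strongly to some [h];
   since [G k w] also Δ-converges to 0, uniqueness of Δ-limits forces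
   [h w = 0], impossible for isometries unless [w = 0]. *)
Lemma op_weak_conv_zero_inv (G H : nat -> X -> X) :
  (forall k, D0 (G k)) -> (forall k, is_inverse (G k) (H k)) ->
  op_weak_conv_zero G -> op_weak_conv_zero H.
Proof.
  intros HG HGH HGw. apply NNPP. intro Hn.
  pose proof HD0 as [_ [Hstar Hss]].
  destruct (Hstar H G (fun k => dislocation_inv _ _ (HG k) (HGH k))
              (fun k => is_inverse_sym _ _ (HGH k)) Hn)
    as [psi [Hpsi [_ [h Hh]]]].
  assert (Htriv : forall w : X, w = vzero).
  { intro w.
    assert (Hnorm : forall j, vnorm (G (psi j) w) = vnorm w)
      by (intro j; apply dislocation_vnorm, HG).
    assert (Hd0 : delta_conv (fun j => G (psi j) w) vzero).
    { apply (delta_conv_subseq (fun k => G k w) vzero psi Hpsi).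
      eapply delta_conv_ext; [|exact (Hss _ w G (delta_conv_const vzero) HG HGw)].
      intro k. apply vadd_zero_l. }
    assert (Hhw : h w = vzero).
    { apply (delta_conv_unique0 HUC _ _ (vnorm w) (fun j => Req_le _ _ (Hnorm j))); auto.
      apply delta_conv_of_strong, Hh. }
    apply vnorm_eq0. apply NNPP. intro Hw.
    destruct (Hh w (vnorm w)) as [N HN].
    { destruct (Rle_lt_or_eq_dec _ _ (vnorm_nonneg _ w)); [lra|congruence]. }
    specialize (HN N (le_n N)). unfold R_dist in HN.
    rewrite Hhw, vsub_zero, Hnorm, Rminus_0_r, Rabs_right in HN; [lra|apply Rle_ge, vnorm_nonneg]. }
  apply Hn. intros x f _ eps He. exists 0%nat. intros k _.
  rewrite (Htriv (H k x)). unfold R_dist. rewrite Rminus_diag, Rabs_R0. lra.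
Qed.

End DislocationGroup.

Section ProfileRemainders.
Context {X : Banach}.
Variable D0 : (X -> X) -> Prop.
Hypothesis HD0 : dislocation_group D0.
Hypothesis HUC : uniformly_convex X.
Variables (u : nat -> X) (M : nat) (g ginv : nat -> nat -> X -> X) (w : nat -> X).
Hypothesis HgD0 : forall n k, (1 <= n <= M)%nat -> D0 (g n k).
Hypothesis Hginv : forall n k, (1 <= n <= M)%nat -> is_inverse (g n k) (ginv n k).
Hypothesis Hw : forall n, (1 <= n <= M)%nat -> delta_conv (fun k => ginv n k (u k)) (w n).
Hypothesis Horth : forall n m, (1 <= n)%nat -> (n < m)%nat -> (m <= M)%nat ->
  op_weak_conv_zero (fun k x => ginv n k (g m k x)).

Lemma profiles_weak_conv_zero n m : (1 <= n <= M)%nat -> (1 <= m <= M)%nat -> n <> m ->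
  op_weak_conv_zero (fun k x => ginv n k (g m k x)).
Proof.
  intros Hn Hm Hnm. destruct (Nat.lt_gt_cases n m) as [[Hlt|Hgt] _]; [exact Hnm| |].
  - apply Horth; lia.
  - apply (op_weak_conv_zero_inv D0 HD0 HUC (fun k x => ginv m k (g n k x))).
    + intro k. apply (dislocation_inv_comp D0 HD0 (g m k)); auto.
    + intro k. apply is_inverse_comp; auto.
    + apply Horth; lia.
Qed.

Lemma profile_remainder_delta_conv n p : (1 <= n <= M)%nat -> (p <= M)%nat ->
  delta_conv (fun k => ginv n k (vsub (u k) (vsum1 p (fun m => g m k (w m)))))
    (if (p <? n)%nat then w n else vzero).
Proof.
  intro Hn. induction p as [|p IH]; intro Hp.
  - rewrite (proj2 (Nat.ltb_lt 0 n)) by lia.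
    eapply delta_conv_ext; [|exact (Hw n Hn)]. intro k. simpl. rewrite vsub_zero. reflexivity.
  - specialize (IH ltac:(lia)).
    assert (Hstep : forall k,
      vadd (ginv n k (vsub (u k) (vsum1 p (fun m => g m k (w m)))))
           (ginv n k (g (S p) k (vopp (w (S p)))))
      = ginv n k (vsub (u k) (vsum1 (S p) (fun m => g m k (w m))))).
    { intro k. simpl.
      destruct (dislocation_isometry D0 HD0 _ (HgD0 (S p) k ltac:(lia))) as [g_add _].
      destruct (dislocation_isometry D0 HD0 (ginv n k)) as [ginv_add _].
      { apply (dislocation_inv D0 HD0 (g n k)); auto. }
      rewrite vsub_addr, ginv_add, (additive_opp _ g_add). reflexivity. }
    eapply delta_conv_ext; [exact Hstep|].
    destruct (Nat.eq_dec (S p) n) as [<-|Hne].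
    + rewrite (proj2 (Nat.ltb_lt p (S p))) in IH by lia.
      rewrite (proj2 (Nat.ltb_ge (S p) (S p))) by lia.
      pose proof (delta_conv_translate _ _ (vopp (w (S p))) IH) as Htr.
      rewrite vadd_opp in Htr.
      eapply delta_conv_ext; [|exact Htr]. intro k. simpl. f_equal.
      symmetry. apply (Hginv (S p) k Hn).
    + replace ((S p <? n)%nat) with ((p <? n)%nat)
        by (destruct (Nat.ltb_spec p n), (Nat.ltb_spec (S p) n); auto; lia).
      apply (delta_conv_add_dislocation D0 HD0 _ _ _ (fun k x => ginv n k (g (S p) k x)) IH).
      * intro k. apply (dislocation_inv_comp D0 HD0 (g n k)); auto with arith.
      * apply profiles_weak_conv_zero; lia.
Qed.

Lemma profile_remainder_delta_conv0 n : (1 <= n <= M)%nat ->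
  delta_conv (fun k => ginv n k (vsub (u k) (vsum1 M (fun m => g m k (w m))))) vzero.
Proof.
  intro Hn. pose proof (profile_remainder_delta_conv n M Hn (le_n M)) as Hrem.
  rewrite (proj2 (Nat.ltb_ge M n)) in Hrem by lia. exact Hrem.
Qed.

End ProfileRemainders.

Theorem lemma5p9
  (X : Banach) (HUC : uniformly_convex X) (HUS : uniformly_smooth X)
  (D0 D : (X -> X) -> Prop) (HD0 : dislocation_group D0)
  (HD : forall h, D h -> D0 h)
  (u : nat -> X) (Hu : exists C, forall k, vnorm (u k) <= C)
  (M : nat)
  (g ginv : nat -> nat -> X -> X) (w : nat -> X)
  (HgD : forall n k, (1 <= n <= M + 1)%nat -> D (g n k))
  (Hginv : forall n k, (1 <= n <= M + 1)%nat -> is_inverse (g n k) (ginv n k))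
  (Hg1 : forall k x, g 1%nat k x = x)
  (Hw : forall n, (1 <= n <= M)%nat -> delta_conv (fun k => ginv n k (u k)) (w n))
  (Horth : forall n m, (1 <= n)%nat -> (n < m)%nat -> (m <= M)%nat ->
     op_weak_conv_zero (fun k x => ginv n k (g m k x)))
  (phi : nat -> nat) (Hphi : strictly_increasing phi)
  (HM1 : delta_conv
     (fun j => ginv (M + 1)%nat (phi j)
        (vsub (u (phi j)) (vsum1 M (fun n => g n (phi j) (w n)))))
     (w (M + 1)%nat))
  (Hw0 : w (M + 1)%nat <> vzero) :
  forall n, (1 <= n <= M)%nat ->
    op_weak_conv_zero (fun j x => ginv n (phi j) (g (M + 1)%nat (phi j) x)).
Proof.
  intros n Hn. apply NNPP. intro Hnot.
  assert (HgD0 : forall m k, (1 <= m <= M + 1)%nat -> D0 (g m k)) by (intros; apply HD, HgD; lia).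
  set (Y := fun k => vsub (u k) (vsum1 M (fun m => g m k (w m)))).
  assert (Hrem : delta_conv (fun j => ginv n (phi j) (Y (phi j))) vzero).
  { apply (delta_conv_subseq (fun k => ginv n k (Y k)) _ _ Hphi).
    exact (profile_remainder_delta_conv0 D0 HD0 HUC u M g ginv w
      (fun m k Hm => HgD0 m k ltac:(lia)) (fun m k Hm => Hginv m k ltac:(lia)) Hw Horth n Hn). }
  set (T := fun j x => ginv n (phi j) (g (M + 1)%nat (phi j) x)).
  set (S := fun j x => ginv (M + 1)%nat (phi j) (g n (phi j) x)).
  assert (HTD : forall j, D0 (T j)).
  { intro j. unfold T. apply (dislocation_inv_comp D0 HD0 (g n (phi j)));
      [apply HgD0|apply Hginv|apply HgD0]; lia. }
  assert (HTS : forall j, is_inverse (T j) (S j))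
    by (intro j; unfold T, S; apply is_inverse_comp; apply Hginv; lia).
  destruct (dislocation_inv_delta_conv0 D0 HD0 T S _ HTD HTS Hnot Hrem) as [psi [Hpsi Hz0]].
  destruct Hu as [C HC].
  destruct (vnorm_vsum1_bounded (fun k m => g m k (w m)) M) as [K HK].
  { intros m Hm. exists (vnorm (w m)). intro k.
    rewrite (dislocation_vnorm D0 HD0 _ _ (HgD0 m k ltac:(lia))). lra. }
  apply Hw0, (delta_conv_unique0 HUC (fun i => ginv (M + 1)%nat (phi (psi i)) (Y (phi (psi i))))
    _ (C + K)).
  - intro i.
    rewrite (dislocation_vnorm D0 HD0 _ _ (dislocation_inv D0 HD0 _ _
      (HgD0 (M + 1)%nat _ ltac:(lia)) (Hginv (M + 1)%nat _ ltac:(lia)))).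
    eapply Rle_trans; [apply vnorm_sub_le|]. apply Rplus_le_compat; [apply HC|apply HK].
  - exact (delta_conv_subseq _ _ _ Hpsi HM1).
  - eapply delta_conv_ext; [|exact Hz0]. intro i. unfold S. f_equal.
    apply (Hginv n (phi (psi i)) ltac:(lia)).
Qed.
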